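(* Let $B$ be a Boolean algebra that is not complete. Then there exist a CFG-space $X$ over $B$ (one may take $X=\{(x,y)\in B^2: x\wedge y=0\}$ with $d((x,y),(x',y'))=(x\triangle x')\vee(y\triangle y')$), subsets $U,V\subset X$, and an isometry $f:U\to V$ such that there is no contractive map $F:X\to X$ whose restriction to $U$ is $f$.
   Context: A Boolean metric space over $B$ is a set with symmetric $d$ into $B$, $d(x,y)=0$ iff $x=y$, $d(x,z)\le d(x,y)\vee d(y,z)$. Contractive: $d(f(x),f(y))\le d(x,y)$; isometry: bijection preserving $d$. A partition of $B$ is a finite family of pairwise disjoint elements with supremum $1$; $x$ is a convex combination of $x_0,\dots,x_n$ with coefficients a partition $a_0,\dots,a_n$ if $a_i\wedge d(x,x_i)=0$ for all $i$. A CFG-space is a Boolean metric space that is convex (every such convex combination of its points exists in it) and finitely generated (some finite subset $S$ has every point as a convex combination of points of $S$). $B$ is complete if every subset has a supremum; $\triangle$ is symmetric difference. *)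

(* A Boolean algebra is a complemented distributive lattice
   with top and bottom: [ctbDistrLatticeType disp]. *)
From HB Require Import structures.
From mathcomp Require Import all_boot all_order.
Set Implicit Arguments. Unset Strict Implicit. Unset Printing Implicit Defensive.
Import Order.Theory.
Local Open Scope order_scope.

Section BoolMetric.
Context {disp : Order.disp_t} (B : ctbDistrLatticeType disp).

Definition symdiff (x y : B) : B := (x `\` y) `|` (y `\` x).

Definition bool_metric (X : Type) (d : X -> X -> B) : Prop :=
  (forall x y, d x y = d y x) /\
  (forall x y, d x y = \bot <-> x = y) /\
  (forall x y z, d x z <= d x y `|` d y z).

Definition is_partition (n : nat) (a : 'I_n.+1 -> B) : Prop :=
  (forall i j, i <> j -> a i `&` a j = \bot) /\
  \join_(i < n.+1) a i = \top.

Definition convex_comb (X : Type) (d : X -> X -> B) (x : X)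
  (n : nat) (a : 'I_n.+1 -> B) (xs : 'I_n.+1 -> X) : Prop :=
  forall i, a i `&` d x (xs i) = \bot.

Definition convex_space (X : Type) (d : X -> X -> B) : Prop :=
  forall (n : nat) (a : 'I_n.+1 -> B) (xs : 'I_n.+1 -> X),
    is_partition a -> exists x : X, convex_comb d x a xs.

Definition finitely_generated (X : Type) (d : X -> X -> B) : Prop :=
  exists (m : nat) (g : 'I_m -> X),
    forall x : X, exists (n : nat) (a : 'I_n.+1 -> B) (h : 'I_n.+1 -> 'I_m),
      is_partition a /\ convex_comb d x a (fun i => g (h i)).

Definition CFG_space (X : Type) (d : X -> X -> B) : Prop :=
  bool_metric d /\ convex_space d /\ finitely_generated d.

Definition contractive (X : Type) (d : X -> X -> B) (F : X -> X) : Prop :=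
  forall x y, d (F x) (F y) <= d x y.

Definition isometry_on (X : Type) (d : X -> X -> B) (U V : X -> Prop)
  (f : X -> X) : Prop :=
  (forall u, U u -> V (f u)) /\
  (forall u u', U u -> U u' -> f u = f u' -> u = u') /\
  (forall v, V v -> exists u, U u /\ f u = v) /\
  (forall u u', U u -> U u' -> d (f u) (f u') = d u u').

Definition complete_BA : Prop :=
  forall P : B -> Prop, exists s : B,
    (forall b, P b -> b <= s) /\ (forall t, (forall b, P b -> b <= t) -> s <= t).

End BoolMetric.

(* We take X = B × B with d((x,y),(x',y')) = (x △ x') ∨ (y △ y').
   This is the square of the Boolean metric space (B, △); the paper's space
   {(x,y) | x ∧ y = 0} is a convex subspace of it, and all the points used
   below lie in that subspace.  The basic tool is the agreement principle
   a ∧ (x △ y) = ⊥  ⇔  a ∧ x = a ∧ y ("x and y agree on a").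

   Let P ⊆ B have no supremum, and let Q (P_orth below)
   be the set of elements disjoint from every member of P.  On U = {(⊥,¬a) | a ∈ P ∪ Q}
   let f fix the points with a ∈ P and send (⊥,¬b) to (b,¬b) for b ∈ Q;
   f preserves distances.  If F were a contractive extension, the first
   coordinate p of F(⊥,⊥) would satisfy a ∧ p = ⊥ for a ∈ P and b ≤ p for
   b ∈ Q, and then ¬p would be a supremum of P. *)
From HB Require Import structures.
From mathcomp Require Import all_boot all_order.
From Stdlib Require Import Classical ClassicalEpsilon.
Set Implicit Arguments. Unset Strict Implicit.
Import Order.Theory.
Local Open Scope order_scope.

Section SymmetricDifference.
Context {disp : Order.disp_t} (B : ctbDistrLatticeType disp).
Implicit Types a b c x y z : B.

Lemma le_meetC_eq0 x c : (x <= c) = (x `&` ~` c == \bot).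
Proof. by rewrite disj_leC complK. Qed.

Lemma meet_symdiff_eq0 a x y : (a `&` symdiff x y == \bot) = (a `&` x == a `&` y).
Proof.
rewrite /symdiff meetUr join_eq0 !meetxB !diff_eq0 eq_le.
by congr andb; rewrite lexI leIl.
Qed.

Lemma symdiffC x y : symdiff x y = symdiff y x.
Proof. by rewrite /symdiff joinC. Qed.

Lemma symdiff0x x : symdiff \bot x = x.
Proof. by rewrite /symdiff diff0x diffx0 join0x. Qed.

Lemma symdiffCC x y : symdiff (~` x) (~` y) = symdiff x y.
Proof. by rewrite /symdiff !diffE !complK joinC; congr (_ `|` _); apply: meetC. Qed.

Lemma symdiff_metric : bool_metric (@symdiff _ B).
Proof.
split; first exact: symdiffC.
split=> [x y|x y z].
  rewrite -[symdiff x y]meet1x; split=> [/eqP|->].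
    by rewrite meet_symdiff_eq0 !meet1x => /eqP.
  by apply/eqP; rewrite meet_symdiff_eq0.
set c := _ `|` _.
have agree_off_c u v : symdiff u v <= c -> ~` c `&` u = ~` c `&` v.
  by rewrite le_meetC_eq0 meetC meet_symdiff_eq0 => /eqP.
rewrite le_meetC_eq0 meetC meet_symdiff_eq0.
by rewrite (agree_off_c x y) ?leUl // (agree_off_c y z) ?leUr.
Qed.

Lemma meet_glue n (a y : 'I_n.+1 -> B) j :
  (forall i j, i <> j -> a i `&` a j = \bot) ->
  a j `&` \join_(i < n.+1) (a i `&` y i) = a j `&` y j.
Proof.
move=> disj; apply/eqP; rewrite eq_le; apply/andP; split; last first.
  by rewrite lexI leIl (joins_min (j := j)) // leIr.
rewrite (big_morph (Order.meet (a j)) (meetUr (a j)) (meetx0 (a j))).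
apply: joins_le => i _; rewrite lexI leIl /= meetA.
case: (eqVneq i j) => [->|ne]; first by rewrite meetxx leIr.
by rewrite disj ?meet0x ?le0x // => E; rewrite E eqxx in ne.
Qed.

Lemma symdiff_convex : convex_space (@symdiff _ B).
Proof.
move=> n a xs [disj _]; exists (\join_(i < n.+1) (a i `&` xs i)) => j.
by apply/eqP; rewrite meet_symdiff_eq0 meet_glue.
Qed.

End SymmetricDifference.

Section ProductSpace.
Context {disp : Order.disp_t} (B : ctbDistrLatticeType disp).
Variables (X1 X2 : Type) (d1 : X1 -> X1 -> B) (d2 : X2 -> X2 -> B).

Definition prod_dist (p q : X1 * X2) : B := d1 p.1 q.1 `|` d2 p.2 q.2.

Lemma meet_prod_dist_eq0 (a : B) p q :
  (a `&` prod_dist p q == \bot) = (a `&` d1 p.1 q.1 == \bot) && (a `&` d2 p.2 q.2 == \bot).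
Proof. by rewrite /prod_dist meetUr join_eq0. Qed.

Lemma prod_metric : bool_metric d1 -> bool_metric d2 -> bool_metric prod_dist.
Proof.
move=> [sym1 [zero1 tri1]] [sym2 [zero2 tri2]]; split.
  by move=> p q; rewrite /prod_dist sym1 sym2.
split=> [[x1 x2] [y1 y2]|p q r].
  rewrite /prod_dist /=; split=> [/eqP|[-> ->]].
    by rewrite join_eq0 => /andP[/eqP/zero1 -> /eqP/zero2 ->].
  by rewrite (proj2 (zero1 y1 y1)) // (proj2 (zero2 y2 y2)) // joinxx.
by rewrite /prod_dist joinACA leU2.
Qed.

Lemma prod_convex : convex_space d1 -> convex_space d2 -> convex_space prod_dist.
Proof.
move=> conv1 conv2 n a xs part.
have [x1 comb1] := conv1 n a (fun i => (xs i).1) part.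
have [x2 comb2] := conv2 n a (fun i => (xs i).2) part.
by exists (x1, x2) => i; apply/eqP; rewrite meet_prod_dist_eq0 comb1 comb2 eqxx.
Qed.

End ProductSpace.

Section Square.
Context {disp : Order.disp_t} (B : ctbDistrLatticeType disp).
Implicit Types a b c x y : B.

Definition sq_dist : B * B -> B * B -> B := prod_dist (@symdiff _ B) (@symdiff _ B).

Lemma meet_sq_dist_eq0 a p q :
  (a `&` sq_dist p q == \bot) = (a `&` p.1 == a `&` q.1) && (a `&` p.2 == a `&` q.2).
Proof. by rewrite meet_prod_dist_eq0 !meet_symdiff_eq0. Qed.

Definition lit (s : bool) x : B := if s then x else ~` x.
Definition corner (s : bool) : B := if s then \top else \bot.

Lemma meet_lit a s x : a <= lit s x -> a `&` x = a `&` corner s.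
Proof.
case: s => /= h; first by rewrite meetx1; apply/meet_idPl.
by rewrite meetx0; apply/eqP; rewrite disj_leC.
Qed.

Lemma lit_disjoint s s' x : s != s' -> lit s x `&` lit s' x = \bot.
Proof. by case: s; case: s' => //= _; rewrite ?meetxC ?meetCx. Qed.

(* The four corners are indexed by the two binary digits of i < 4. *)
Definition bit0 (i : 'I_4) : bool := odd i.
Definition bit1 (i : 'I_4) : bool := (1 < i)%N.

Lemma bits_inj (i j : 'I_4) : bit0 i = bit0 j -> bit1 i = bit1 j -> i = j.
Proof.
by case: i j => [[|[|[|[|?]]]] ?] [[|[|[|[|?]]]] ?] //= _ _; apply: val_inj.
Qed.

(* B × B is generated by its four corners: (x,y) is their combination with
   coefficients the four cells x ∧ y, ¬x ∧ y, x ∧ ¬y, ¬x ∧ ¬y. *)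
Lemma sq_finitely_generated : finitely_generated sq_dist.
Proof.
exists 4, (fun i => (corner (bit0 i), corner (bit1 i))).
move=> [x y]; exists 3, (fun i => lit (bit0 i) x `&` lit (bit1 i) y), id.
split; first split.
- move=> i j ne.
  have [e0|ne0] := eqVneq (bit0 i) (bit0 j); last by rewrite meetACA lit_disjoint ?meet0x.
  have [e1|ne1] := eqVneq (bit1 i) (bit1 j); first by case: ne; apply: bits_inj.
  by rewrite meetACA (lit_disjoint _ ne1) meetx0.
- rewrite !big_ord_recl big_ord0 /= /bit0 /bit1 /=.
  by rewrite joinx0 joinA -!meetUl !joinCx !meet1x joinCx.
- move=> i; apply/eqP; rewrite meet_sq_dist_eq0 /=.
  by rewrite (meet_lit (leIl _ _)) (meet_lit (leIr _ _)) !eqxx.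
Qed.

Lemma sq_metric : bool_metric sq_dist.
Proof. exact: prod_metric (symdiff_metric B) (symdiff_metric B). Qed.

Lemma sq_CFG : CFG_space sq_dist.
Proof.
split; first exact: sq_metric.
split; last exact: sq_finitely_generated.
by apply: prod_convex; apply: symdiff_convex.
Qed.

Lemma agree_fst p q c : sq_dist p q <= ~` c -> c `&` p.1 = c `&` q.1.
Proof. by rewrite le_meetC_eq0 complK meetC meet_sq_dist_eq0 => /andP[/eqP]. Qed.

Lemma sq_dist_origin c : sq_dist (\bot, \bot) (\bot, ~` c) = ~` c.
Proof. by rewrite /sq_dist /prod_dist /= !symdiff0x join0x. Qed.

Lemma sq_dist_diag b b' : sq_dist (b, ~` b) (b', ~` b') = sq_dist (\bot, ~` b) (\bot, ~` b').
Proof. by rewrite /sq_dist /prod_dist /= symdiff0x symdiffCC joinxx join0x. Qed.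

Lemma sq_dist_mixed a b : a `&` b = \bot ->
  sq_dist (\bot, ~` a) (b, ~` b) = sq_dist (\bot, ~` a) (\bot, ~` b).
Proof.
move=> /eqP disj; rewrite /sq_dist /prod_dist /= !symdiff0x symdiffCC join0x.
by rewrite /symdiff (disj_diffr disj) joinCA joinxx.
Qed.

End Square.

Section Isometries.
Context {disp : Order.disp_t} (B : ctbDistrLatticeType disp).

Lemma isometry_onto_image (X : Type) (d : X -> X -> B) (U : X -> Prop) (f : X -> X) :
  bool_metric d -> (forall u u', U u -> U u' -> d (f u) (f u') = d u u') ->
  isometry_on d U (fun v => exists u, U u /\ f u = v) f.
Proof.
move=> [_ [zero _]] pres; split; first by move=> u Uu; exists u.
split; first by move=> u u' Uu Uu' E; apply/zero; rewrite -pres // E; apply/zero.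
by split=> // v [u [Uu <-]]; exists u.
Qed.

End Isometries.

Section Suprema.
Context {disp : Order.disp_t} (B : ctbDistrLatticeType disp).

Lemma compl_separator_is_sup (P : B -> Prop) (p : B) :
  (forall a, P a -> a `&` p = \bot) ->
  (forall b, (forall a, P a -> a `&` b = \bot) -> b <= p) ->
  (forall a, P a -> a <= ~` p) /\ (forall t, (forall a, P a -> a <= t) -> ~` p <= t).
Proof.
move=> disjP maxQ; split=> [a /disjP|t ub]; first by rewrite -disj_leC => ->.
have Qt : forall a, P a -> a `&` (~` p `&` ~` t) = \bot.
  by move=> a /ub; rewrite le_meetC_eq0 meetCA => /eqP ->; rewrite meetx0.
rewrite le_meetC_eq0; apply/eqP/le_anti; rewrite le0x andbT.
by rewrite -(meetxC p) lexI (maxQ _ Qt) leIl.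
Qed.

End Suprema.

Section Counterexample.
Context {disp : Order.disp_t} (B : ctbDistrLatticeType disp).
Variable P : B -> Prop.

Definition P_orth (b : B) : Prop := forall a, P a -> a `&` b = \bot.

(* The domain U = {(⊥,¬a) | a ∈ P ∪ P_orth} and the map f of the theorem,
   which bends (⊥,¬b) to (b,¬b) for b ∈ P_orth and fixes the other points. *)
Definition bend_dom (p : B * B) : Prop :=
  exists a, (P a \/ P_orth a) /\ p = (\bot, ~` a).

Definition bend (p : B * B) : B * B :=
  if excluded_middle_informative (P_orth (~` p.2)) then (~` p.2, p.2) else p.

Lemma bend_orth b : P_orth b -> bend (\bot, ~` b) = (b, ~` b).
Proof.
move=> orth_b; rewrite /bend /= complK.
by case: excluded_middle_informative.
Qed.

(* An element of P is in P_orth only if it is ⊥, so f fixes the P-points. *)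
Lemma bend_P a : P a -> bend (\bot, ~` a) = (\bot, ~` a).
Proof.
move=> Pa; rewrite /bend /= complK.
case: excluded_middle_informative => //= orth_a.
have a0 : a = \bot by rewrite -(orth_a a Pa) meetxx.
by rewrite a0 compl0.
Qed.

Lemma bend_preserves_dist u u' : bend_dom u -> bend_dom u' ->
  sq_dist (bend u) (bend u') = sq_dist u u'.
Proof.
have mixed a b : P a -> P_orth b ->
    sq_dist (bend (\bot, ~` a)) (bend (\bot, ~` b)) = sq_dist (\bot, ~` a) (\bot, ~` b).
  by move=> Pa orth_b; rewrite bend_P // bend_orth // sq_dist_mixed // orth_b.
case=> [a [[Pa|orth_a] ->]] [a' [[Pa'|orth_a'] ->]].
- by rewrite !bend_P.
- exact: mixed.
- by rewrite [LHS](sq_metric B).1 [RHS](sq_metric B).1; apply: mixed.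
- by rewrite !bend_orth // sq_dist_diag.
Qed.

Lemma bend_isometry :
  isometry_on (@sq_dist _ B) bend_dom (fun v => exists u, bend_dom u /\ bend u = v) bend.
Proof. exact: isometry_onto_image (sq_metric B) bend_preserves_dist. Qed.

(* A contractive extension F of f yields a supremum of P: the first
   coordinate p of F(⊥,⊥) agrees with (F(⊥,¬c)).1 on c, since (⊥,⊥) and
   (⊥,¬c) are at distance ¬c; this forces a ∧ p = ⊥ on P and b ≤ p on P_orth. *)
Lemma contractive_extension_sup (F : B * B -> B * B) :
  contractive (@sq_dist _ B) F -> (forall u, bend_dom u -> F u = bend u) ->
  exists s, (forall a, P a -> a <= s) /\ (forall t, (forall a, P a -> a <= t) -> s <= t).
Proof.
move=> contrF extF; set p := (F (\bot, \bot)).1.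
have agree c : c `&` p = c `&` (F (\bot, ~` c)).1.
  by apply: agree_fst; apply: le_trans (contrF _ _) _; rewrite sq_dist_origin.
exists (~` p); apply: compl_separator_is_sup => [a Pa|b orth_b].
  by rewrite agree extF ?bend_P ?meetx0 //; exists a; split; [left|].
by apply/meet_idPl; rewrite agree extF ?bend_orth ?meetxx //; exists b; split; [right|].
Qed.

End Counterexample.

Lemma no_sup_of_incomplete {disp : Order.disp_t} (B : ctbDistrLatticeType disp) :
  ~ complete_BA B -> exists P : B -> Prop, forall s,
    ~ ((forall a, P a -> a <= s) /\ (forall t, (forall a, P a -> a <= t) -> s <= t)).
Proof.
move=> incomplete; apply: NNPP => all_sup; apply: incomplete => P.
by apply: NNPP => no_sup; apply: all_sup; exists P => s sup_s; apply: no_sup; exists s.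
Qed.

Theorem mainTheorem13 (disp : Order.disp_t) (B : ctbDistrLatticeType disp) :
  ~ complete_BA B ->
  exists (X : Type) (d : X -> X -> B),
    CFG_space d /\
    exists (U V : X -> Prop) (f : X -> X),
      isometry_on d U V f /\
      ~ (exists F : X -> X, contractive d F /\ forall u, U u -> F u = f u).
Proof.
move=> /no_sup_of_incomplete [P no_sup].
exists (B * B)%type, (@sq_dist _ B); split; first exact: sq_CFG.
exists (bend_dom P), (fun v => exists u, bend_dom P u /\ bend P u = v), (bend P).
split; first exact: bend_isometry.
case=> F [contrF extF].
by have [s sup_s] := contractive_extension_sup contrF extF; apply: (no_sup s).
Qed.
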